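(* Let $f$ be a convex function on $[0,\infty)$ with $f(1)=1$ such that $g(x)=x^2f''(x)$ satisfies $g\ge0$ and $x^2g''(x)-g(\alpha)g(x/\alpha)\le0$ for all $x\ge0$, $\alpha>0$. Assume furthermore that $f(x)\ge c x^s$ for all $x\ge0$, for some $c>0$ and $s>1$. Then for all distributions $p_X\ll q_X$ on a finite set, $$D_{\mathrm{KL}}(p_X\|q_X)\le \frac{\log\big(1+D_{\hat f}(p_X\|q_X)\big)}{s-1},\qquad \hat f=f-1,$$ equivalently $\sum_x q_X(x) f\big(p_X(x)/q_X(x)\big)\ge e^{(s-1)D_{\mathrm{KL}}(p_X\|q_X)}$.
   Context: For distributions $p\ll q$ on a finite set and a function $h$ on $[0,\infty)$, $D_h(p\|q)=\sum_x q(x)h(p(x)/q(x))$ with $0h(0/0)=0$. $D_{\mathrm{KL}}$ is the Kullback–Leibler divergence (natural logarithm). *)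

From mathcomp Require Import all_boot all_order all_algebra.
From mathcomp Require Import all_classical all_reals all_analysis.
Set Implicit Arguments. Unset Strict Implicit. Unset Printing Implicit Defensive.
Import Order.TTheory GRing.Theory Num.Theory.
Local Open Scope ring_scope.

Definition convex_nonneg (R : realType) (f : R -> R) : Prop :=
  forall x y t : R, 0 <= x -> 0 <= y -> 0 <= t -> t <= 1 ->
    f (t * x + (1 - t) * y) <= t * f x + (1 - t) * f y.

Definition is_distr (R : realType) (T : finType) (p : T -> R) : Prop :=
  (forall x, 0 <= p x) /\ \sum_(x : T) p x = 1.

Definition abs_cont (R : realType) (T : finType) (p q : T -> R) : Prop :=
  forall x, q x = 0 -> p x = 0.

(* D_h(p||q) = sum_x q(x) h(p(x)/q(x)), with the convention 0 h(0/0) = 0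
   (terms with q(x) = 0 are dropped; they have p(x) = 0 when p << q). *)
Definition fdiv (R : realType) (T : finType) (h : R -> R) (p q : T -> R) : R :=
  \sum_(x : T | q x != 0) q x * h (p x / q x).

Definition KL (R : realType) (T : finType) (p q : T -> R) : R :=
  \sum_(x : T | p x != 0) p x * ln (p x / q x).

Definition gfun (R : realType) (f : R -> R) (x : R) : R :=
  x ^+ 2 * derive1 (derive1 f) x.

From mathcomp Require Import all_boot all_order all_algebra.
From mathcomp Require Import all_classical all_reals all_analysis.
From mathcomp Require Import ring lra.
Set Implicit Arguments. Unset Strict Implicit. Unset Printing Implicit Defensive.
Import Order.TTheory GRing.Theory Num.Theory.
Import numFieldNormedType.Exports.
Local Open Scope ring_scope.

(* Two applications of the tangent-line inequality for functions with nonnegative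
   second derivative turn the differential condition on g into
     f (u v) <= f u * f v + (v - 1) B u - (u - 1) A v      (u, v > 0).
   The correction terms have zero q-average, so D_f is submultiplicative on tensor
   products of distributions, whereas D_{t^s} is multiplicative.  With f >= c t^s
   this gives c M^n <= F^n for all n, where M = D_{t^s}(p||q) and F = D_f(p||q);
   hence M <= F.  The tensorization needs p/q > 0 on the support of q; this is
   removed by mixing p with q and using the convexity of f.  Finally, Jensen's
   inequality for ln gives (s - 1) KL(p||q) <= ln M <= ln F = ln (1 + D_{f-1}(p||q)). *)

Section MeanValue.
Variables (R : realType) (h dh : R -> R).
Hypothesis h_deriv : forall x : R, 0 < x -> is_derive x 1 h (dh x).

Lemma MVT_pos (a b : R) : 0 < a -> a <= b ->
  exists2 c, a <= c <= b & h b - h a = dh c * (b - a).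
Proof.
move=> a0 ab; have a_pos x : a <= x -> 0 < x by apply: lt_le_trans.
have h_cont : {within `[a, b], continuous h}%classic.
  apply: derivable_within_continuous => x /[!in_itv] /= /andP[ax _].
  exact: (@ex_derive _ _ _ _ _ _ _ (h_deriv (a_pos x ax))).
have h_deriv_ab x : x \in `]a, b[ -> is_derive x 1 h (dh x).
  by rewrite in_itv /= => /andP[ax _]; exact/h_deriv/a_pos/ltW.
have [c] := MVT_segment ab h_deriv_ab h_cont.
by rewrite in_itv /=; exists c.
Qed.

Lemma deriv_ge0_nondecreasing (a b : R) :
  (forall x, 0 < x -> 0 <= dh x) -> 0 < a -> a <= b -> h a <= h b.
Proof.
move=> dh_ge0 a0 ab; have [c /andP[ac _] E] := MVT_pos a0 ab.
by rewrite -subr_ge0 E mulr_ge0 ?subr_ge0 ?dh_ge0 ?(lt_le_trans a0 ac).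
Qed.

End MeanValue.

Section Tangent.
Variables (R : realType) (h dh d2h : R -> R).
Hypothesis h_deriv : forall x : R, 0 < x -> is_derive x 1 h (dh x).
Hypothesis dh_deriv : forall x : R, 0 < x -> is_derive x 1 dh (d2h x).
Hypothesis d2h_ge0 : forall x : R, 0 < x -> 0 <= d2h x.

Lemma tangent_le (a u : R) : 0 < a -> 0 < u -> h a + dh a * (u - a) <= h u.
Proof.
move=> a0 u0; have dh_mono := deriv_ge0_nondecreasing dh_deriv d2h_ge0.
have [au|ua] := leP a u.
  have [c /andP[ac _] E] := MVT_pos h_deriv a0 au.
  by rewrite -lerBrDl E ler_wpM2r ?subr_ge0 ?dh_mono.
have [c /andP[uc ca] E] := MVT_pos h_deriv u0 (ltW ua).
have : dh c <= dh a by apply: dh_mono; rewrite ?(lt_le_trans u0 uc).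
nra.
Qed.

End Tangent.

Definition centered_submultiplicative (R : realType) (f : R -> R) : Prop :=
  exists A B : R -> R, forall u v : R, 0 < u -> 0 < v ->
    f (u * v) <= f u * f v + (v - 1) * B u - (u - 1) * A v.

Section CenteredSubmultiplicativity.
Variables (R : realType) (f f1 f2 g g1 g2 : R -> R).
Hypothesis f_at1 : f 1 = 1.
Hypothesis f_deriv : forall x : R, 0 < x -> is_derive x 1 f (f1 x).
Hypothesis f1_deriv : forall x : R, 0 < x -> is_derive x 1 f1 (f2 x).
Hypothesis g_deriv : forall x : R, 0 < x -> is_derive x 1 g (g1 x).
Hypothesis g1_deriv : forall x : R, 0 < x -> is_derive x 1 g1 (g2 x).
Hypothesis gE : forall x : R, 0 < x -> g x = x ^+ 2 * f2 x.
Hypothesis g_cond : forall x a : R, 0 < x -> 0 < a ->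
  x ^+ 2 * g2 x - g a * g (x / a) <= 0.

Lemma g_mul_le (u v : R) : 0 < u -> 0 < v ->
  g (u * v) <= g u * (f v - f1 1 * (v - 1)) + (v - 1) * (u * g1 u).
Proof.
move=> u0 v0.
pose chi := cst (g u) * (f - cst (f1 1) * (id - cst 1)) - (g \o *%R u)
  + (id - cst 1) * cst (u * g1 u).
pose dchi := cst (g u) * (f1 - cst (f1 1)) - cst u * (g1 \o *%R u)
  + cst (u * g1 u).
pose d2chi x := g u * f2 x - u * (u * g2 (u * x)).
have chi_deriv (x : R) : 0 < x -> is_derive x 1 chi (dchi x).
  move=> x0; have := f_deriv x0; have := g_deriv (mulr_gt0 u0 x0) => ? ?.
  by apply: is_derive_eq; rewrite /dchi /cst /= !fctE /= /GRing.scale /=; ring.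
have dchi_deriv (x : R) : 0 < x -> is_derive x 1 dchi (d2chi x).
  move=> x0; have := f1_deriv x0; have := g1_deriv (mulr_gt0 u0 x0) => ? ?.
  by apply: is_derive_eq; rewrite /d2chi /cst /= !fctE /= /GRing.scale /=; ring.
(* [x^2 chi''(x) = g u * g x - (u x)^2 g''(u x)]: this is [g_cond] at [u x] and [u]. *)
have d2chi_ge0 (x : R) : 0 < x -> 0 <= d2chi x.
  move=> x0; have ux0 := mulr_gt0 u0 x0.
  have := g_cond ux0 u0.
  rewrite [u * x / u]mulrAC divff ?mul1r ?gt_eqF // (gE x0) => g_cond_ux.
  rewrite -(pmulr_rge0 _ (exprn_gt0 2 x0)) -oppr_le0.
  rewrite (_ : - _ = (u * x) ^+ 2 * g2 (u * x) - g u * (x ^+ 2 * f2 x)) //.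
  by rewrite /d2chi; ring.
have := tangent_le chi_deriv dchi_deriv d2chi_ge0 ltr01 v0.
rewrite /chi /dchi /cst /= !fctE /= !mulr1 f_at1; lra.
Qed.

Lemma f_mul_le (u v : R) : 0 < u -> 0 < v ->
  f (u * v) <= f u * f v + (v - 1) * (u * f1 u - f1 1 * f u)
    - (u - 1) * (f1 1 * f v - v * f1 v + (v - 1) * (f1 1 + g 1 - f1 1 * f1 1)).
Proof.
move=> u0 v0; rewrite [u * v]mulrC.
pose phi := f * cst (f v) - (f \o *%R v)
  + cst (v - 1) * (id * f1 - cst (f1 1) * f).
pose dphi := f1 * cst (f v) - cst v * (f1 \o *%R v)
  + cst (v - 1) * (f1 + g * GRing.inv - cst (f1 1) * f1).
pose d2phi x := f2 x * f v - v * (v * f2 (v * x))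
  + (v - 1) * (f2 x + (g x * - x ^- 2 + x^-1 * g1 x) - f1 1 * f2 x).
have phi_deriv (x : R) : 0 < x -> is_derive x 1 phi (dphi x).
  move=> x0; have := f_deriv x0; have := f1_deriv x0.
  have := f_deriv (mulr_gt0 v0 x0) => ? ? ?.
  apply: is_derive_eq; rewrite /dphi /cst /= !fctE /= /GRing.scale /= (gE x0).
  by field; rewrite gt_eqF.
have dphi_deriv (x : R) : 0 < x -> is_derive x 1 dphi (d2phi x).
  move=> x0; have := f1_deriv x0; have := g_deriv x0.
  have := f1_deriv (mulr_gt0 v0 x0).
  have := @is_deriveV _ id x 1 1 (lt0r_neq0 x0) (is_derive_id x 1) => ? ? ? ?.
  by apply: is_derive_eq; rewrite /d2phi /cst /= !fctE /= /GRing.scale /=; ring.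
(* [x^2 phi''(x)] is the slack in [g_mul_le x v]. *)
have d2phi_ge0 (x : R) : 0 < x -> 0 <= d2phi x.
  move=> x0; have := g_mul_le x0 v0.
  rewrite (gE x0) (gE (mulr_gt0 x0 v0)) -(pmulr_rge0 _ (exprn_gt0 2 x0)) => g_le.
  suff -> : x ^+ 2 * d2phi x = x ^+ 2 * f2 x * (f v - f1 1 * (v - 1))
      + (v - 1) * (x * g1 x) - (x * v) ^+ 2 * f2 (x * v) by rewrite subr_ge0.
  by rewrite /d2phi (gE x0) (mulrC v x); field; rewrite gt_eqF.
have := tangent_le phi_deriv dphi_deriv d2phi_ge0 ltr01 u0.
rewrite /phi /dphi /cst /= !fctE /= !mulr1 invr1 mulr1 f_at1; lra.
Qed.

Lemma centered_submultiplicative_of_g_cond : centered_submultiplicative f.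
Proof.
exists (fun v => f1 1 * f v - v * f1 v + (v - 1) * (f1 1 + g 1 - f1 1 * f1 1)).
by exists (fun u => u * f1 u - f1 1 * f u); exact: f_mul_le.
Qed.

End CenteredSubmultiplicativity.

Section FDivergence.
Variables (R : realType) (T : finType).
Implicit Types (p q : T -> R) (h k : R -> R).

Lemma sum_support p q : abs_cont p q -> \sum_(x | q x != 0) p x = \sum_x p x.
Proof.
move=> pq; rewrite [RHS](bigID (fun x => q x != 0)) /= [X in _ + X]big1 ?addr0 //.
by move=> x /negPn/eqP/pq.
Qed.

Lemma fdivD h k p q : fdiv (fun t => h t + k t) p q = fdiv h p q + fdiv k p q.
Proof. by rewrite /fdiv -big_split; apply: eq_bigr => x _; rewrite mulrDr. Qed.

Lemma fdivB h k p q : fdiv (fun t => h t - k t) p q = fdiv h p q - fdiv k p q.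
Proof. by rewrite /fdiv -sumrB; apply: eq_bigr => x _; rewrite mulrBr. Qed.

Lemma fdivZ a h p q : fdiv (fun t => a * h t) p q = a * fdiv h p q.
Proof. by rewrite /fdiv mulr_sumr; apply: eq_bigr => x _; rewrite mulrCA. Qed.

Lemma fdiv_cst a p q : is_distr q -> fdiv (fun=> a) p q = a.
Proof.
by move=> [_ q1]; rewrite /fdiv -mulr_suml (@sum_support q q) ?q1 ?mul1r.
Qed.

Lemma fdiv_self h q : is_distr q -> fdiv h q q = h 1.
Proof.
by move=> dq; rewrite -(fdiv_cst (h 1) q dq); apply: eq_bigr => x qx; rewrite divff.
Qed.

Lemma fdiv_id p q : is_distr p -> abs_cont p q -> fdiv id p q = 1.
Proof.
move=> [_ p1] pq; rewrite /fdiv -[RHS]p1 -(sum_support pq).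
by apply: eq_bigr => x qx; rewrite mulrCA divff ?mulr1.
Qed.

Lemma fdiv_sub1 p q : is_distr p -> is_distr q -> abs_cont p q ->
  fdiv (fun t => t - 1) p q = 0.
Proof. by move=> dp dq pq; rewrite fdivB fdiv_id // fdiv_cst // subrr. Qed.

Lemma fdiv_le {h k p q} : is_distr p -> is_distr q ->
  (forall t, 0 <= t -> h t <= k t) -> fdiv h p q <= fdiv k p q.
Proof.
move=> [p0 _] [q0 _] hk; apply: ler_sum => x _.
by rewrite ler_wpM2l ?hk ?divr_ge0.
Qed.

Lemma fdiv_ge0 {h p q} : is_distr p -> is_distr q ->
  (forall t, 0 <= t -> 0 <= h t) -> 0 <= fdiv h p q.
Proof. by move=> dp dq h0; rewrite -(fdiv_cst 0 p dq); exact: fdiv_le. Qed.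

Lemma fdiv_mix a h p q : fdiv h (fun x => a * p x + (1 - a) * q x) q =
  fdiv (fun t => h (a * t + (1 - a))) p q.
Proof. by apply: eq_bigr => x qx; congr (_ * h _); field. Qed.

Definition equiv_distr p q :=
  [/\ is_distr p, is_distr q, abs_cont p q & abs_cont q p].

Lemma equiv_distr_ratio_gt0 p q x :
  equiv_distr p q -> q x != 0 -> 0 < p x / q x.
Proof.
move=> [[p0 _] [q0 _] _ qp] qx; rewrite divr_gt0 // lt_def ?qx ?q0 //.
by rewrite p0 andbT; apply: contra qx => /eqP/qp ->.
Qed.

Lemma equiv_distr_mix a p q : 0 < a < 1 -> is_distr p -> is_distr q ->
  abs_cont p q -> equiv_distr (fun x => a * p x + (1 - a) * q x) q.
Proof.
move=> /andP[a0 a1] [p0 p1] [q0 q1] pq; have a1' : 0 < 1 - a by rewrite subr_gt0.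
split=> // [|x|x].
- split=> [x|]; first by rewrite addr_ge0 ?mulr_ge0 ?p0 ?q0 ?ltW.
  by rewrite big_split /= -!mulr_sumr p1 q1 !mulr1 subrKC.
- by move=> qx; rewrite qx (pq _ qx) !mulr0 addr0.
- move/eqP; rewrite paddr_eq0 ?mulr_ge0 ?p0 ?q0 ?ltW // => /andP[_].
  by rewrite mulf_eq0 gt_eqF // => /eqP.
Qed.

End FDivergence.

Definition tensor (R : realType) (T1 T2 : finType) (p1 : T1 -> R) (p2 : T2 -> R) :
  T1 * T2 -> R := fun z => p1 z.1 * p2 z.2.

Section Tensor.
Variables (R : realType) (T1 T2 : finType).

Lemma is_distr_tensor (p1 : T1 -> R) (p2 : T2 -> R) :
  is_distr p1 -> is_distr p2 -> is_distr (tensor p1 p2).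
Proof.
move=> [p1_ge0 p1_sum] [p2_ge0 p2_sum]; split=> [z|]; first exact: mulr_ge0.
by rewrite -(pair_bigA _ (fun x y => p1 x * p2 y)) -big_distrlr p1_sum p2_sum /= mulr1.
Qed.

Lemma abs_cont_tensor (p1 q1 : T1 -> R) (p2 q2 : T2 -> R) :
  abs_cont p1 q1 -> abs_cont p2 q2 -> abs_cont (tensor p1 p2) (tensor q1 q2).
Proof.
move=> pq1 pq2 z /eqP; rewrite /tensor mulf_eq0.
by case/orP=> /eqP => [/pq1|/pq2] ->; rewrite ?mul0r ?mulr0.
Qed.

Lemma equiv_distr_tensor (p1 q1 : T1 -> R) (p2 q2 : T2 -> R) :
  equiv_distr p1 q1 -> equiv_distr p2 q2 -> equiv_distr (tensor p1 p2) (tensor q1 q2).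
Proof.
move=> [? ? ? ?] [? ? ? ?].
by split; apply: is_distr_tensor || apply: abs_cont_tensor.
Qed.

Lemma fdiv_tensor (p1 q1 : T1 -> R) (p2 q2 : T2 -> R) (h : R -> R) :
  fdiv h (tensor p1 p2) (tensor q1 q2) =
  \sum_(x | q1 x != 0) \sum_(y | q2 y != 0)
    q1 x * q2 y * h (p1 x / q1 x * (p2 y / q2 y)).
Proof.
rewrite pair_big_dep /fdiv; apply: eq_big => z; rewrite /tensor mulf_eq0 ?negb_or //.
by case/andP=> q1z q2z; congr (_ * h _); field; rewrite q1z q2z.
Qed.

Lemma fdiv_tensor_powR (p1 q1 : T1 -> R) (p2 q2 : T2 -> R) (s : R) :
  is_distr p1 -> is_distr q1 -> is_distr p2 -> is_distr q2 ->
  fdiv (fun t => t `^ s) (tensor p1 p2) (tensor q1 q2) =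
  fdiv (fun t => t `^ s) p1 q1 * fdiv (fun t => t `^ s) p2 q2.
Proof.
move=> [p1_ge0 _] [q1_ge0 _] [p2_ge0 _] [q2_ge0 _].
rewrite fdiv_tensor /fdiv big_distrlr; apply: eq_bigr => x _; apply: eq_bigr => y _.
by rewrite powRM ?divr_ge0 // /=; ring.
Qed.

Lemma fdiv_tensor_le (p1 q1 : T1 -> R) (p2 q2 : T2 -> R) (f : R -> R) :
  centered_submultiplicative f -> equiv_distr p1 q1 -> equiv_distr p2 q2 ->
  fdiv f (tensor p1 p2) (tensor q1 q2) <= fdiv f p1 q1 * fdiv f p2 q2.
Proof.
move=> [A [B f_mul]] e1 e2; have [dp1 dq1 pq1 _] := e1; have [dp2 dq2 pq2 _] := e2.
have -> : fdiv f p1 q1 * fdiv f p2 q2 = fdiv f p1 q1 * fdiv f p2 q2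
    + fdiv B p1 q1 * fdiv (fun t => t - 1) p2 q2
    - fdiv (fun t => t - 1) p1 q1 * fdiv A p2 q2.
  by rewrite !fdiv_sub1 // mul0r mulr0 subr0 addr0.
rewrite fdiv_tensor /fdiv !big_distrlr -big_split -sumrB /=.
apply: ler_sum => x q1x; rewrite -big_split -sumrB /=; apply: ler_sum => y q2y.
have := f_mul _ _ (equiv_distr_ratio_gt0 e1 q1x) (equiv_distr_ratio_gt0 e2 q2y).
move: (p1 x / q1 x) (p2 y / q2 y) => u v uv_le.
rewrite -subr_ge0; set d := (X in 0 <= X).
have -> : d = q1 x * q2 y * (f u * f v + (v - 1) * B u - (u - 1) * A v - f (u * v)).
  by rewrite /d; ring.
by rewrite !mulr_ge0 ?subr_ge0 //; [case: dq1 | case: dq2].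
Qed.

End Tensor.

Lemma fdiv_tensor_pow (R : realType) (T : finType) (f : R -> R) (s : R) (p q : T -> R) :
  centered_submultiplicative f -> f 1 = 1 -> (forall t, 0 <= t -> 0 <= f t) ->
  equiv_distr p q -> forall n : nat, exists (T' : finType) (p' q' : T' -> R),
    [/\ equiv_distr p' q', fdiv f p' q' <= fdiv f p q ^+ n
      & fdiv (fun t => t `^ s) p' q' = fdiv (fun t => t `^ s) p q ^+ n].
Proof.
move=> f_mul f_at1 f_ge0 epq; have [dp dq _ _] := epq.
elim=> [|n [T' [p' [q' [epq' f_le powR_eq]]]]].
  have d1 : is_distr (fun _ : 'I_1 => 1 : R) by split=> //; rewrite big_ord1.
  exists 'I_1, (fun=> 1), (fun=> 1).
  split; first by split.
  - by rewrite fdiv_self // f_at1 expr0.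
  - by rewrite fdiv_self // powR1 expr0.
exists (T * T')%type, (tensor p p'), (tensor q q'); split.
- exact: equiv_distr_tensor.
- apply: le_trans (fdiv_tensor_le f_mul epq epq') _.
  by rewrite exprS ler_wpM2l ?fdiv_ge0.
- have [dp' dq' _ _] := epq'.
  by rewrite fdiv_tensor_powR // powR_eq exprS.
Qed.

Lemma le_of_mul_exprn_le (R : realType) (c x y : R) : 0 < c -> 0 <= y ->
  (forall n : nat, c * x ^+ n <= y ^+ n) -> x <= y.
Proof.
move=> c0 y0 cx_le; rewrite leNgt; apply/negP => yx; have x0 := le_lt_trans y0 yx.
have yx1 : `|y / x| < 1 by rewrite ger0_norm ?divr_ge0 ?(ltW x0) // ltr_pdivrMr ?mul1r.
suff : c <= 0 by rewrite leNgt c0.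
rewrite -(cvg_lim _ (cvg_expr yx1)) //; apply: limr_ge; first exact: cvgP (cvg_expr yx1).
by near=> n; rewrite exprMn exprVn ler_pdivlMr ?exprn_gt0.
Unshelve. all: by end_near.
Qed.

Lemma fdiv_powR_le_equiv (R : realType) (T : finType) (f : R -> R) (c s : R)
    (p q : T -> R) :
  centered_submultiplicative f -> f 1 = 1 -> 0 < c ->
  (forall t, 0 <= t -> c * t `^ s <= f t) ->
  equiv_distr p q -> fdiv (fun t => t `^ s) p q <= fdiv f p q.
Proof.
move=> f_mul f_at1 c0 f_ge epq; have [dp dq _ _] := epq.
have f_ge0 t : 0 <= t -> 0 <= f t.
  by move=> t0; apply: le_trans (f_ge t t0); rewrite mulr_ge0 ?(ltW c0) ?powR_ge0.
apply: (le_of_mul_exprn_le c0 (fdiv_ge0 dp dq f_ge0)) => n.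
have [T' [p' [q' [[dp' dq' _ _] f_le <-]]]] := fdiv_tensor_pow s f_mul f_at1 f_ge0 epq n.
by apply: le_trans f_le; rewrite -fdivZ; apply: fdiv_le.
Qed.

Lemma bernoulli_ineq (R : realDomainType) (x : R) (n : nat) :
  -1 <= x -> 1 + n%:R * x <= (1 + x) ^+ n.
Proof.
move=> x_ge; have x1 : 0 <= 1 + x by lra.
elim: n => [|n IH]; first by rewrite mul0r addr0 expr0.
have n0 : 0 <= n%:R :> R := ler0n _ _.
have := ler_wpM2l x1 IH; rewrite exprS -natr1; nra.
Qed.

Lemma le_of_le_add_mul (R : realFieldType) (x y k : R) :
  (forall e, 0 < e < 1 -> x <= y + e * k) -> x <= y.
Proof.
move=> H; apply/ler_addgt0Pr => d d0.
have k_le := ler_norm k; have k0 := normr_ge0 k.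
have D0 : 0 < d + `|k| + 1 by lra.
pose e := d / (d + `|k| + 1).
have e_ok : 0 < e < 1 by rewrite divr_gt0 //= ltr_pdivrMr // mul1r; lra.
have ek : e * k <= d by rewrite mulrAC ler_pdivrMr //; nra.
by apply: le_trans (H e e_ok) _; rewrite lerD2l.
Qed.

Lemma fdiv_powR_le (R : realType) (T : finType) (f : R -> R) (c s : R) (p q : T -> R) :
  convex_nonneg f -> centered_submultiplicative f -> f 1 = 1 -> 0 < c ->
  (forall t, 0 <= t -> c * t `^ s <= f t) -> 0 <= s ->
  is_distr p -> is_distr q -> abs_cont p q ->
  fdiv (fun t => t `^ s) p q <= fdiv f p q.
Proof.
move=> f_convex f_mul f_at1 c0 f_ge s0 dp dq pq.
set M := fdiv _ p q; set F := fdiv f p q.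
have M0 : 0 <= M by apply: fdiv_ge0 => // t _; exact: powR_ge0.
pose N := Num.Def.archi_bound s; have sN : s <= N%:R := ltW (archi_boundP s0).
apply: (@le_of_le_add_mul _ _ _ (N%:R * M - F + 1)) => e /andP[e0 e1].
pose a := 1 - e; have a01 : 0 < a < 1 by rewrite /a; apply/andP; split; lra.
have [a0 a1] := andP a01.
pose pa x := a * p x + (1 - a) * q x.
have epa : equiv_distr pa q by exact: equiv_distr_mix.
have F_mix : fdiv f pa q <= a * F + (1 - a).
  rewrite fdiv_mix -[1 - a in X in _ <= X](fdiv_cst _ p dq) -fdivZ -fdivD.
  apply: fdiv_le => // t t0.
  by have := f_convex t 1 a t0 ler01 (ltW a0) (ltW a1); rewrite f_at1 !mulr1.
have M_mix : a ^+ N * M <= fdiv (fun t => t `^ s) pa q.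
  rewrite fdiv_mix -fdivZ; apply: fdiv_le => // t t0.
  have aN : a `^ N%:R <= a `^ s by apply: ger_powR => //; rewrite a0 ltW.
  rewrite -powR_mulrn ?(ltW a0) //; apply: le_trans (ler_wpM2r (powR_ge0 _ _) aN) _.
  have at0 : 0 <= a * t := mulr_ge0 (ltW a0) t0.
  have b0 : 0 <= 1 - a by rewrite subr_ge0 ltW.
  rewrite -powRM ?(ltW a0) //; apply: ge0_ler_powR; rewrite ?nnegrE ?lerDl //.
  exact: addr_ge0.
have bern : 1 - N%:R * e <= a ^+ N by rewrite -mulrN bernoulli_ineq // lerN2 ltW.
have := fdiv_powR_le_equiv f_mul f_at1 c0 f_ge epa.
have := ler_wpM2r M0 bern.
move: M_mix F_mix; rewrite /a; lra.
Qed.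

Section WeightedSums.
Variables (R : realType) (I : finType) (P : pred I) (w y : I -> R).
Hypothesis w_ge0 : forall i, P i -> 0 <= w i.
Hypothesis y_gt0 : forall i, P i -> 0 < y i.
Hypothesis w_sum : \sum_(i | P i) w i = 1.

Lemma weighted_sum_gt0 : 0 < \sum_(i | P i) w i * y i.
Proof.
have wy_ge0 i : P i -> 0 <= w i * y i by move=> Pi; rewrite mulr_ge0 ?w_ge0 ?ltW ?y_gt0.
rewrite lt_def sumr_ge0 // andbT; apply/eqP => /(psumr_eq0P wy_ge0) wy0.
move: w_sum; rewrite big1 => [/eqP|i Pi]; first by rewrite eq_sym oner_eq0.
by have /eqP := wy0 i Pi; rewrite mulf_eq0 (gt_eqF (y_gt0 Pi)) orbF => /eqP.
Qed.

Lemma jensen_ln : \sum_(i | P i) w i * ln (y i) <= ln (\sum_(i | P i) w i * y i).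
Proof.
set S := \sum_(i | P i) w i * y i; have S0 : 0 < S := weighted_sum_gt0.
have RHS0 : \sum_(i | P i) w i * (y i / S - 1) = 0.
  rewrite (eq_bigr (fun i => w i * y i / S - w i)) => [|i _]; last first.
    by rewrite mulrBr mulr1 mulrA.
  by rewrite sumrB -mulr_suml divff ?gt_eqF // w_sum subrr.
have LHSE : \sum_(i | P i) w i * ln (y i / S) = \sum_(i | P i) w i * ln (y i) - ln S.
  rewrite -[ln S]mul1r -w_sum mulr_suml -sumrB; apply: eq_bigr => i Pi.
  by rewrite ln_div ?posrE ?y_gt0 // mulrBr.
rewrite -subr_le0 -LHSE -[X in _ <= X]RHS0; apply: ler_sum => i Pi.
rewrite ler_wpM2l ?w_ge0 // -[X in ln X](subrKC 1) le_ln1Dx //.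
by have := divr_gt0 (y_gt0 Pi) S0; lra.
Qed.

End WeightedSums.

Section PowerDivergence.
Variables (R : realType) (T : finType) (s : R) (p q : T -> R).
Hypotheses (s_gt0 : 0 < s) (dp : is_distr p) (dq : is_distr q) (pq : abs_cont p q).

Let q_gt0 x : p x != 0 -> 0 < q x.
Proof.
move=> px; have [q0 _] := dq.
by rewrite lt_def q0 andbT; apply: contra px => /eqP/pq ->.
Qed.

Let ratio_gt0 x : p x != 0 -> 0 < p x / q x.
Proof. by move=> px; rewrite divr_gt0 ?q_gt0 // lt_def px; case: dp => ->. Qed.

Lemma fdiv_powR_supp : fdiv (fun t => t `^ s) p q =
  \sum_(x | p x != 0) p x * (p x / q x) `^ (s - 1).
Proof.
rewrite /fdiv big_mkcond [RHS]big_mkcond; apply: eq_bigr => x _.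
have [px|/negPn/eqP px0] := boolP (p x != 0).
  rewrite gt_eqF ?q_gt0 // -(mulr_powRB1 (ltW (ratio_gt0 px)) s_gt0).
  by rewrite mulrA [q x * _]mulrCA divff ?mulr1 // gt_eqF // q_gt0.
by rewrite px0 mul0r powR0 ?mulr0 ?if_same // gt_eqF.
Qed.

Let weights : [/\ forall x, p x != 0 -> 0 <= p x,
  forall x, p x != 0 -> 0 < (p x / q x) `^ (s - 1)
  & \sum_(x | p x != 0) p x = 1].
Proof.
have [p0 p1] := dp; split=> [x _|x px|]; first exact: p0.
  exact: powR_gt0 (ratio_gt0 px).
by rewrite (@sum_support _ _ p p) // p1.
Qed.

Lemma fdiv_powR_gt0 : 0 < fdiv (fun t => t `^ s) p q.
Proof. by have [? ? ?] := weights; rewrite fdiv_powR_supp weighted_sum_gt0. Qed.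

Lemma KL_le_ln_fdiv_powR : (s - 1) * KL p q <= ln (fdiv (fun t => t `^ s) p q).
Proof.
have [? ? ?] := weights; rewrite fdiv_powR_supp; apply: le_trans (jensen_ln _ _ _) => //.
rewrite /KL mulr_sumr; apply: ler_sum => x px.
by rewrite ln_powR mulrCA.
Qed.

End PowerDivergence.

Lemma derivable_is_derive1 (R : realType) (h : R -> R) (x : R) :
  derivable h x 1 -> is_derive x 1 h (derive1 h x).
Proof. by rewrite derive1E => /derivableP. Qed.

Theorem theorem8 (R : realType) (f : R -> R) (c s : R) :
  convex_nonneg f ->
  f 1 = 1 ->
  (forall x : R, 0 < x ->
     [/\ derivable f x 1, derivable (derive1 f) x 1,
         derivable (gfun f) x 1 & derivable (derive1 (gfun f)) x 1]) ->
  (forall x : R, 0 < x -> 0 <= gfun f x) ->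
  (forall x alpha : R, 0 < x -> 0 < alpha ->
     x ^+ 2 * derive1 (derive1 (gfun f)) x - gfun f alpha * gfun f (x / alpha) <= 0) ->
  0 < c -> 1 < s ->
  (forall x : R, 0 <= x -> c * x `^ s <= f x) ->
  forall (T : finType) (p q : T -> R),
    is_distr p -> is_distr q -> abs_cont p q ->
    KL p q <= ln (1 + fdiv (fun t => f t - 1) p q) / (s - 1).
Proof.
move=> f_convex f_at1 f_deriv _ g_cond c0 s1 f_ge T p q dp dq pq.
have s0 : 0 < s := lt_trans ltr01 s1.
have f_mul : centered_submultiplicative f.
  apply: (@centered_submultiplicative_of_g_cond _ f _ _ (gfun f) _ _ f_at1 _ _ _ _
    (fun _ _ => erefl) g_cond).
  - by move=> x /f_deriv[d _ _ _]; exact: derivable_is_derive1.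
  - by move=> x /f_deriv[_ d _ _]; exact: derivable_is_derive1.
  - by move=> x /f_deriv[_ _ d _]; exact: derivable_is_derive1.
  - by move=> x /f_deriv[_ _ _ d]; exact: derivable_is_derive1.
have M_le_F := fdiv_powR_le f_convex f_mul f_at1 c0 f_ge (ltW s0) dp dq pq.
have M_gt0 := fdiv_powR_gt0 s0 dp dq pq.
rewrite fdivB fdiv_cst // addrC subrK ler_pdivlMr ?subr_gt0 // mulrC.
apply: le_trans (KL_le_ln_fdiv_powR s0 dp dq pq) _.
by rewrite ler_ln ?posrE // (lt_le_trans M_gt0).
Qed.
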